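(* Let $n,k$ be integers with $1\le k\le n-2$, let $b_1\ge\dots\ge b_n\ge 0$ be any included bid profile with $b_{k+1}>0$, and let $\alpha\in(0,1)$. The R$^2$-TFRM mechanism described in the context has expected redistribution fraction (expectation over the randomization) $f^*=\alpha\cdot\frac{k}{n}$. Moreover it is allocatively efficient, restricted user incentive compatible in expectation, individually rational for users, and it is individually rational for the miner in expectation whenever $$\alpha\le\frac{n}{k+(n-k)\,b_k/b_{k+1}}.$$
   Context: Setting: transactions in a mempool belong to distinct users $i$ with valuation $\theta_i\ge0$ and bid $b_i\ge0$. The block includes the $n$ highest bids, ordered $b_1\ge\dots\ge b_n$, and confirms the top $k$ ($k\le n-2$). Let $r_i=\frac{k}{n}b_{k+1}$ for $i\le k$ and $r_j=\frac{k}{n}b_k$ for $j\in\{k+1,\dots,n\}$ (the R-TFRM rebate, i.e. $k/n$ times the $k$-th highest bid among the other included users). In R$^2$-TFRM, using trusted randomness not controlled by the miner, independently for each included user a rebate is granted with probability $\alpha$: a confirmed user $i$ pays $b_{k+1}-r_i$ with probability $\alpha$ and $b_{k+1}$ with probability $1-\alpha$; an included unconfirmed user $j$ pays $-r_j$ with probability $\alpha$ and $0$ with probability $1-\alpha$. The miner receives the sum of payments. User utility: $u_i=\mathbb{1}[i\text{ confirmed}]\,\theta_i-p_i$. Allocative efficiency: the confirmed transactions maximize total valuation. Restricted UIC in expectation: for every included user, bidding $\theta_i$ maximizes its expected utility whatever the other included users bid. IR for users: every included user's utility is nonnegative under truthful bidding. IR for the miner in expectation: the total payment $k\,b_{k+1}$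 is at least the expected total rebate. The redistribution fraction is the fraction of the VCG payment $k\,b_{k+1}$ returned to the $k$ confirmed users in the worst case. *)

From HB Require Import structures.
From mathcomp Require Import all_boot all_order all_algebra.
Set Implicit Arguments. Unset Strict Implicit. Unset Printing Implicit Defensive.
Import Order.TTheory GRing.Theory Num.Theory.
Local Open Scope ring_scope.

Section R2TFRM.
Variable R : realFieldType.
Variables n k : nat.
Implicit Types (b theta : 'I_n -> R) (alpha : R).

(* ostat b m = b_m, the m-th highest bid (1-indexed), i.e. b_1 >= ... >= b_n. *)
Definition ostat b (m : nat) : R :=
  nth 0 (sort (fun x y : R => y <= x) [seq b j | j <- enum 'I_n]) m.-1.

(* The top k bids are confirmed; ties broken by index (smaller index first). *)
Definition above b (i : 'I_n) : {set 'I_n} :=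
  [set j : 'I_n | (b i < b j) || ((b j == b i) && (nat_of_ord j < nat_of_ord i)%N)].
Definition confirmed b (i : 'I_n) : bool := (#|above b i| < k)%N.

Definition vcg_pay b (i : 'I_n) : R := if confirmed b i then ostat b k.+1 else 0.

Definition rebate b (i : 'I_n) : R :=
  if confirmed b i then (k%:R / n%:R) * ostat b k.+1
  else (k%:R / n%:R) * ostat b k.

(* Rebate actually paid, given the outcome g of user i's coin (granted w.p. alpha). *)
Definition rebate_paid b (i : 'I_n) (g : bool) : R := if g then rebate b i else 0.

Definition pay b (i : 'I_n) (g : bool) : R := vcg_pay b i - rebate_paid b i g.

Definition expect alpha (f : bool -> R) : R := alpha * f true + (1 - alpha) * f false.

Definition exp_util alpha theta b (i : 'I_n) : R :=
  (if confirmed b i then theta i else 0) - expect alpha (pay b i).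

(* Expected redistribution fraction: expected rebate to the confirmed users
   divided by the VCG payment k * b_{k+1}. *)
Definition redistribution_fraction alpha b : R :=
  (\sum_(i | confirmed b i) expect alpha (rebate_paid b i)) / (k%:R * ostat b k.+1).

Definition alloc_efficient : Prop :=
  forall theta, (forall i, 0 <= theta i) ->
    #|[set i | confirmed theta i]| = k /\
    forall S : {set 'I_n}, (#|S| <= k)%N ->
      \sum_(i in S) theta i <= \sum_(i | confirmed theta i) theta i.

Definition upd b (i : 'I_n) (x : R) : 'I_n -> R :=
  fun j => if j == i then x else b j.

Definition restricted_UIC_exp alpha : Prop :=
  forall theta b (i : 'I_n) (x : R),
    (forall j, 0 <= theta j) -> (forall j, 0 <= b j) -> 0 <= x ->
    exp_util alpha theta (upd b i x) i <= exp_util alpha theta (upd b i (theta i)) i.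

Definition user_IR alpha : Prop :=
  forall theta, (forall j, 0 <= theta j) ->
    forall i, 0 <= exp_util alpha theta theta i.

Definition miner_IR_exp alpha b : Prop :=
  \sum_i expect alpha (rebate_paid b i) <= k%:R * ostat b k.+1.

End R2TFRM.

From HB Require Import structures.
From mathcomp Require Import all_boot all_order all_algebra.
From mathcomp Require Import ring zify.
Set Implicit Arguments. Unset Strict Implicit. Unset Printing Implicit Defensive.
Import Order.TTheory GRing.Theory Num.Theory.
Local Open Scope ring_scope.

(* The rebate of user i is (k/n) V_i, where V_i is the k-th highest bid among
   the other users: V_i = b_{k+1} if i is confirmed and V_i = b_k otherwise.
   Hence the expected utility of i is [i confirmed] (theta_i - V_i) + alpha (k/n) V_i.
   Since V_i does not depend on b_i, the second term is out of i's control and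
   the first one is the utility in a (k+1)-st price auction, which is maximised
   (and nonnegative) under truthful bidding.  Summing the rebates gives
   alpha (k/n) (k b_{k+1} + (n - k) b_k), from which both the redistribution
   fraction and the individual rationality of the miner follow. *)

Section DescendingSort.
Variable R : realDomainType.
Implicit Types (s t : seq R) (x : R).

Lemma count_nth_sorted_ge t m :
  sorted (fun x y : R => y <= x) t -> (m < size t)%N ->
  (count (<%R (nth 0%R t m)) t <= m < count (<=%R (nth 0%R t m)) t)%N.
Proof.
move=> t_sorted m_lt; set v := nth 0 t m.
have ge_trans : transitive (fun x y : R => y <= x).
  by move=> x y z /= yx zy; apply: le_trans zy yx.
have nth_ge p q : (q < size t)%N -> (p <= q)%N -> nth 0 t q <= nth 0 t p.
  move=> q_lt p_le_q; apply: (sorted_leq_nth ge_trans (@lexx _ _) 0 t_sorted) => //.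
  by rewrite inE (leq_ltn_trans p_le_q q_lt).
apply/andP; split.
  rewrite -(cat_take_drop m t) count_cat.
  have -> : count (<%R v) (drop m t) = 0%N.
    apply/eqP; rewrite -leqn0 leqNgt -has_count; apply/hasPn => y /(nthP 0)[p].
    rewrite size_drop => p_lt <-; rewrite nth_drop /= -leNgt.
    by apply: nth_ge; [rewrite -ltn_subRL | exact: leq_addr].
  by rewrite addn0 (leq_trans (count_size _ _)) // size_takel // ltnW.
rewrite -(cat_take_drop m.+1 t) count_cat.
have : all (<=%R v) (take m.+1 t).
  apply/(all_nthP 0) => p; rewrite size_takel // => p_lt.
  by rewrite nth_take //; apply: nth_ge.
by rewrite all_count => /eqP ->; rewrite size_takel // leq_addr.
Qed.

Lemma nth_sort_ge s m x :
  (count (<%R x) s <= m < count (<=%R x) s)%N ->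
  nth 0 (sort (fun x y : R => y <= x) s) m = x.
Proof.
set t := sort _ s; have countE (P : pred R) : count P t = count P s by apply: count_sort.
rewrite -!countE => /andP[gt_x ge_x].
have t_sorted : sorted (fun x y : R => y <= x) t.
  by apply: sort_sorted => y z; apply: le_total.
have m_lt : (m < size t)%N by apply: leq_trans ge_x (count_size _ _).
have /andP[gt_v ge_v] := count_nth_sorted_ge t_sorted m_lt.
case: (ltgtP (nth 0 t m) x) => // [v_lt_x | x_lt_v].
- have : (count (<=%R x) t <= count (<%R (nth 0%R t m)) t)%N.
    by apply: sub_count => y /=; apply: lt_le_trans.
  by move=> /(leq_trans ge_x) /leq_trans /(_ gt_v); rewrite ltnn.
- have : (count (<=%R (nth 0%R t m)) t <= count (<%R x) t)%N.
    by apply: sub_count => y /=; apply: lt_le_trans.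
  by move=> /(leq_trans ge_v) /leq_trans /(_ gt_x); rewrite ltnn.
Qed.

End DescendingSort.

Lemma ler_sum_dominated (R : realDomainType) (T : finType) (f : T -> R) (A B : {set T}) :
  (forall x, 0 <= f x) -> (#|A| <= #|B|)%N ->
  (forall a c, a \in A -> c \in B -> f a <= f c) ->
  \sum_(i in A) f i <= \sum_(i in B) f i.
Proof.
move=> f_ge0 AB_card f_AB.
have [->|[a0 a0A]] := set_0Vmem A; first by rewrite big_set0 sumr_ge0.
have [a aA a_max] := arg_maxP f a0A.
apply: (@le_trans _ _ (f a *+ #|A|)).
  by rewrite -sumr_const ler_sum // => x /a_max.
apply: (@le_trans _ _ (f a *+ #|B|)); first exact: ler_wpMn2l.
by rewrite -sumr_const ler_sum // => c /(f_AB _ _ aA).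
Qed.

Section Rank.
Variables (R : realFieldType) (n : nat).
Implicit Types (b : 'I_n -> R) (i j l : 'I_n).

Definition rank b i : nat := #|above b i|.

Lemma confirmedE k b i : confirmed k b i = (rank b i < k)%N.
Proof. by []. Qed.

Lemma above_irr b i : i \notin above b i.
Proof. by rewrite inE ltxx eqxx ltnn. Qed.

Lemma above_le b i j : j \in above b i -> b i <= b j.
Proof. by rewrite inE => /orP[/ltW | /andP[/eqP -> _]]. Qed.

Lemma above_trans b i j l : j \in above b i -> l \in above b j -> l \in above b i.
Proof.
rewrite !inE => /orP[ij | /andP[/eqP bji ij]] /orP[jl | /andP[/eqP blj jl]].
- by rewrite (lt_trans ij jl).
- by rewrite blj ij.
- by rewrite -bji jl.
- by rewrite blj bji eqxx (ltn_trans jl ij) orbT.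
Qed.

Lemma above_total b i j : i != j -> (i \in above b j) || (j \in above b i).
Proof.
move=> neq_ij; rewrite !inE; case: ltgtP => //= _.
by case: ltngtP => // /val_inj eq_ij; rewrite eq_ij eqxx in neq_ij.
Qed.

Lemma rank_above b i j : j \in above b i -> (rank b j < rank b i)%N.
Proof.
move=> ji; apply: proper_card; apply/properP; split.
  by apply/subsetP => l; apply: above_trans.
by exists j; last exact: above_irr.
Qed.

Lemma rank_inj b : injective (rank b).
Proof.
move=> i j eq_rank; apply/eqP; apply/negPn/negP => /(above_total b).
by case/orP => /rank_above; rewrite eq_rank ltnn.
Qed.

Lemma rank_ltn b i : (rank b i < n)%N.
Proof.
rewrite -[n]card_ord -cardsT; apply: proper_card; apply/properP; split; first exact: subsetT.
by exists i; last exact: above_irr.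
Qed.

Definition rank_ord b i : 'I_n := Ordinal (rank_ltn b i).

Lemma rank_ord_inj b : injective (rank_ord b).
Proof. by move=> i j /(congr1 val) /rank_inj. Qed.

Lemma rank_surj b m : (m < n)%N -> exists j, rank b j = m.
Proof.
move=> m_lt; have /codomP[j /(congr1 val) /= ->] :=
  inj_card_onto (@rank_ord_inj b) (leqnn _) (Ordinal m_lt).
by exists j.
Qed.

Lemma card_confirmed k b : (k <= n)%N -> #|[set i | confirmed k b i]| = k.
Proof.
move=> k_le; have -> : [set i | confirmed k b i] = rank_ord b @^-1: [set m : 'I_n | (m < k)%N].
  by apply/setP => i; rewrite !inE.
rewrite card_preimset; last exact: rank_ord_inj.
have -> : [set m : 'I_n | (m < k)%N] = widen_ord k_le @: [set: 'I_k].
  apply/setP => m; rewrite inE; apply/idP/imsetP => [m_lt | [m' _ ->]]; last exact: (ltn_ord m').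
  by exists (Ordinal m_lt) => //; apply: val_inj.
by rewrite card_imset ?cardsT ?card_ord // => x y /(congr1 val) /= /val_inj.
Qed.

Lemma ostat_rank b j : ostat b (rank b j).+1 = b j.
Proof.
rewrite /ostat; apply: nth_sort_ge; rewrite !(count_map b).
have count_enum (P : pred 'I_n) : count P (enum 'I_n) = #|P|.
  by rewrite cardE size_filter enumT.
rewrite !count_enum; apply/andP; split.
  by apply: subset_leq_card; apply/subsetP => l; rewrite !inE => ->.
apply: (@leq_trans #|j |: above b j|).
  by rewrite cardsU1 above_irr add1n.
apply: subset_leq_card; apply/subsetP => l /setU1P[-> | /above_le le_jl];
  by rewrite inE /=.
Qed.

Lemma ostat_ge0 b m : (forall i, 0 <= b i) -> (0 < m <= n)%N -> 0 <= ostat b m.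
Proof.
move=> b_ge0 /andP[m_gt0 m_le]; have [j rank_j] : exists j, rank b j = m.-1.
  by apply: rank_surj; lia.
by rewrite -(prednK m_gt0) -rank_j ostat_rank.
Qed.

Lemma ler_sum_confirmed k b (S : {set 'I_n}) : (k <= n)%N -> (forall i, 0 <= b i) ->
  (#|S| <= k)%N -> \sum_(i in S) b i <= \sum_(i | confirmed k b i) b i.
Proof.
move=> k_le b_ge0 S_card; set C := [set i | confirmed k b i].
have C_card : #|C| = k by apply: card_confirmed.
have -> : \sum_(i | confirmed k b i) b i = \sum_(i in C) b i.
  by apply: eq_bigl => i; rewrite inE.
rewrite (big_setID C) [X in _ <= X](big_setID S) setIC lerD2l.
apply: ler_sum_dominated => //.
  by rewrite -(leq_add2l #|S :&: C|) cardsID setIC cardsID C_card.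
move=> a c; rewrite !inE => /andP[a_nC _] /andP[_ c_C].
have neq_ac : a != c by apply: contraNneq a_nC => ->.
case/orP: (above_total b neq_ac) => [/rank_above | /above_le //].
by move: a_nC c_C; rewrite !confirmedE; lia.
Qed.

Lemma card_aboveD1_inj b i j1 j2 : j1 != i -> j2 != i ->
  #|above b j1 :\ i| = #|above b j2 :\ i| -> j1 = j2.
Proof.
have card_aboveD1_lt j l : j != i -> j \in above b l ->
    (#|above b j :\ i| < #|above b l :\ i|)%N.
  move=> neq_ji jl; apply: proper_card; apply/properP; split.
    by apply: setSD; apply/subsetP => x; apply: above_trans.
  by exists j; rewrite in_setD1 ?neq_ji ?jl ?(negPf (above_irr b j)) ?andbF.
move=> neq_j1i neq_j2i eq_card; apply/eqP; apply/negPn/negP => /(above_total b).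
case/orP => [/(card_aboveD1_lt _ _ neq_j1i) | /(card_aboveD1_lt _ _ neq_j2i)];
  by rewrite eq_card ltnn.
Qed.

End Rank.

Section KthOtherBid.
Variables (R : realFieldType) (n k : nat).
Hypotheses (k_gt0 : (0 < k)%N) (k_lt_n : (k < n)%N).
Implicit Types (b : 'I_n -> R) (i j : 'I_n).

Definition kth_other_bid b i : R := if confirmed k b i then ostat b k.+1 else ostat b k.

(* [j] is ranked k-th once [i] is removed from the profile. *)
Lemma kth_other_bidP b i :
  exists2 j, j != i & #|above b j :\ i| = k.-1 /\ kth_other_bid b i = b j.
Proof.
rewrite /kth_other_bid confirmedE; case: ltnP => [rank_i | rank_i].
  have [j rank_j] := rank_surj b k_lt_n.
  have i_above_j : i \in above b j.
    have neq_ij : i != j by apply: contraTneq rank_i => ->; rewrite rank_j ltnn.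
    case/orP: (above_total b neq_ij) => // /rank_above.
    by rewrite rank_j ltnNge (ltnW rank_i).
  exists j; first by apply: contraTneq i_above_j => ->; apply: above_irr.
  by rewrite -rank_j ostat_rank; split; move: rank_j; rewrite /rank (cardsD1 i) i_above_j.
have [j rank_j] := rank_surj b (leq_ltn_trans (leq_pred k) k_lt_n).
have i_nabove_j : i \notin above b j.
  by apply/negP => /rank_above; rewrite rank_j; lia.
exists j; first by apply: contraTneq rank_i => <-; rewrite rank_j -ltnNge ltn_predL.
rewrite -(prednK k_gt0) -rank_j ostat_rank; split => //.
by move: rank_j; rewrite /rank (cardsD1 i) (negPf i_nabove_j).
Qed.

Lemma kth_other_bid_eq b1 b2 i : (forall j, j != i -> b1 j = b2 j) ->
  kth_other_bid b1 i = kth_other_bid b2 i.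
Proof.
move=> eq_others.
have [j1 neq_j1i [card_j1 ->]] := kth_other_bidP b1 i.
have [j2 neq_j2i [card_j2 ->]] := kth_other_bidP b2 i.
have above_j1 : above b1 j1 :\ i = above b2 j1 :\ i.
  apply/setP => l; rewrite !inE; have [// | neq_li] := eqVneq l i.
  by rewrite !eq_others.
suff -> : j1 = j2 by apply: eq_others.
by apply: (@card_aboveD1_inj _ _ b2 i _ _ neq_j1i neq_j2i); rewrite -above_j1 card_j1 card_j2.
Qed.

Lemma kth_other_bid_le b i : confirmed k b i -> kth_other_bid b i <= b i.
Proof.
rewrite /kth_other_bid => conf_i; rewrite conf_i.
have [j rank_j] := rank_surj b k_lt_n; rewrite -rank_j ostat_rank.
have neq_ij : i != j by apply: contraTneq conf_i => ->; rewrite confirmedE rank_j ltnn.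
case/orP: (above_total b neq_ij) => [/above_le // | /rank_above].
by move: conf_i; rewrite confirmedE rank_j; lia.
Qed.

Lemma bid_le_kth_other_bid b i : ~~ confirmed k b i -> b i <= kth_other_bid b i.
Proof.
rewrite /kth_other_bid => nconf_i; rewrite (negPf nconf_i).
have [j rank_j] := rank_surj b (leq_ltn_trans (leq_pred k) k_lt_n).
rewrite -(prednK k_gt0) -rank_j ostat_rank.
have neq_ij : i != j.
  by apply: contraNneq nconf_i => ->; rewrite confirmedE rank_j ltn_predL.
case/orP: (above_total b neq_ij) => [/rank_above | /above_le //].
by move: nconf_i; rewrite confirmedE rank_j; lia.
Qed.

Lemma kth_other_bid_ge0 b i : (forall j, 0 <= b j) -> 0 <= kth_other_bid b i.
Proof. by move=> b_ge0; have [j _ [_ ->]] := kth_other_bidP b i. Qed.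

End KthOtherBid.

Section R2TFRM.
Variables (R : realFieldType) (n k : nat).
Implicit Types (alpha : R) (b theta : 'I_n -> R) (i : 'I_n).

Lemma rebateE b i : rebate k b i = k%:R / n%:R * kth_other_bid k b i.
Proof. by rewrite /rebate /kth_other_bid; case: confirmed. Qed.

Lemma expect_rebate_paid alpha b i : expect alpha (rebate_paid k b i) = alpha * rebate k b i.
Proof. by rewrite /expect /rebate_paid mulr0 addr0. Qed.

Lemma exp_utilE alpha theta b i :
  exp_util k alpha theta b i =
  (if confirmed k b i then theta i - kth_other_bid k b i else 0) + alpha * rebate k b i.
Proof.
rewrite /exp_util /expect /pay /vcg_pay /rebate_paid /rebate /kth_other_bid.
by case: confirmed; rewrite ?subr0 ?mulr0 ?addr0; ring.
Qed.

Lemma expected_total_rebate alpha b : (k <= n)%N ->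
  \sum_i expect alpha (rebate_paid k b i)
  = alpha * (k%:R / n%:R) * (k%:R * ostat b k.+1 + (n - k)%:R * ostat b k).
Proof.
move=> k_le_n; set C := [set i | confirmed k b i].
have C_card : #|C| = k by apply: card_confirmed.
under eq_bigr do rewrite expect_rebate_paid /rebate.
rewrite (bigID (mem C)) /= mulrDr; congr (_ + _).
  rewrite (eq_bigr (fun=> alpha * (k%:R / n%:R * ostat b k.+1))); last first.
    by move=> i; rewrite inE => ->.
  by rewrite sumr_const C_card -mulr_natl; ring.
rewrite (eq_bigr (fun=> alpha * (k%:R / n%:R * ostat b k))); last first.
  by move=> i; rewrite inE => /negPf ->.
have -> : \sum_(i | i \notin C) alpha * (k%:R / n%:R * ostat b k)
          = \sum_(i in ~: C) alpha * (k%:R / n%:R * ostat b k).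
  by apply: eq_bigl => i; rewrite in_setC.
by rewrite sumr_const cardsCs setCK card_ord C_card -mulr_natl; ring.
Qed.

Lemma redistribution_fractionE alpha b : (0 < k <= n)%N -> ostat b k.+1 != 0 ->
  redistribution_fraction k alpha b = alpha * (k%:R / n%:R).
Proof.
move=> /andP[k_gt0 k_le_n] ostat_neq0; rewrite /redistribution_fraction.
have -> : \sum_(i | confirmed k b i) expect alpha (rebate_paid k b i)
          = \sum_(i in [set i | confirmed k b i]) alpha * (k%:R / n%:R * ostat b k.+1).
  by apply: eq_big => [i | i conf_i]; rewrite ?inE // expect_rebate_paid /rebate conf_i.
rewrite sumr_const card_confirmed // -mulr_natr; field.
by rewrite ostat_neq0 !pnatr_eq0 -!lt0n k_gt0 (leq_trans k_gt0 k_le_n).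
Qed.

Lemma confirmed_alloc_efficient : (k <= n)%N -> alloc_efficient R n k.
Proof.
move=> k_le_n theta theta_ge0; split; first exact: card_confirmed.
by move=> S; apply: ler_sum_confirmed.
Qed.

Hypotheses (k_gt0 : (0 < k)%N) (k_lt_n : (k < n)%N).

Lemma R2TFRM_restricted_UIC alpha : restricted_UIC_exp n k alpha.
Proof.
move=> theta b i x _ _ _; rewrite !exp_utilE !rebateE.
rewrite (@kth_other_bid_eq _ _ _ k_gt0 k_lt_n _ (upd b i (theta i))); last first.
  by move=> j neq_ji; rewrite /upd (negPf neq_ji).
rewrite lerD2r; have truthful_i : upd b i (theta i) i = theta i by rewrite /upd eqxx.
have [conf_i | nconf_i] := boolP (confirmed k (upd b i (theta i)) i).
  have := kth_other_bid_le k_gt0 k_lt_n conf_i; rewrite truthful_i => kth_le.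
  by case: confirmed; rewrite // subr_ge0.
have := bid_le_kth_other_bid k_gt0 k_lt_n nconf_i; rewrite truthful_i.
by move=> le_kth; case: confirmed; rewrite // subr_le0.
Qed.

Lemma R2TFRM_user_IR alpha : 0 <= alpha -> user_IR n k alpha.
Proof.
move=> alpha_ge0 theta theta_ge0 i; rewrite exp_utilE rebateE; apply: addr_ge0.
  have [conf_i | //] := boolP (confirmed k theta i).
  by rewrite subr_ge0 kth_other_bid_le.
by rewrite !mulr_ge0 ?invr_ge0 ?ler0n ?kth_other_bid_ge0.
Qed.

Lemma R2TFRM_miner_IR alpha b : (forall i, 0 <= b i) -> 0 < ostat b k.+1 ->
  alpha <= n%:R / (k%:R + (n - k)%:R * (ostat b k / ostat b k.+1)) ->
  miner_IR_exp k alpha b.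
Proof.
set c1 := ostat b k.+1; set c0 := ostat b k; move=> b_ge0 c1_gt0.
have c0_ge0 : 0 <= c0 by apply: ostat_ge0; rewrite // k_gt0 ltnW.
have n_gt0 : (0 : R) < n%:R by rewrite ltr0n (leq_trans k_gt0 (ltnW k_lt_n)).
set D := k%:R + _; have D_gt0 : 0 < D.
  by rewrite ltr_wpDr ?ltr0n // mulr_ge0 ?divr_ge0 // ltW.
rewrite ler_pdivlMr // => alphaD_le.
rewrite /miner_IR_exp expected_total_rebate ?(ltnW k_lt_n) //.
have -> : alpha * (k%:R / n%:R) * (k%:R * c1 + (n - k)%:R * c0)
          = k%:R * c1 * (alpha * D / n%:R).
  by rewrite /D; field; rewrite !gt_eqF.
apply: ler_piMr; first by rewrite mulr_ge0 ?ler0n ?ltW.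
by rewrite ler_pdivrMr // mul1r.
Qed.

End R2TFRM.

Theorem theorem6 (R : realFieldType) (n k : nat) (alpha : R) :
  (1 <= k)%N -> (k <= n - 2)%N -> 0 < alpha < 1 ->
  (forall b : 'I_n -> R, (forall i, 0 <= b i) -> 0 < ostat b k.+1 ->
     redistribution_fraction k alpha b = alpha * (k%:R / n%:R))
  /\ alloc_efficient R n k
  /\ restricted_UIC_exp n k alpha
  /\ user_IR n k alpha
  /\ (forall b : 'I_n -> R, (forall i, 0 <= b i) -> 0 < ostat b k.+1 ->
        alpha <= n%:R / (k%:R + (n - k)%:R * (ostat b k / ostat b k.+1)) ->
        miner_IR_exp k alpha b).
Proof.
move=> k_gt0 k_le /andP[alpha_gt0 _].
have k_lt_n : (k < n)%N by lia.
split.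
  move=> b _ ostat_gt0; apply: redistribution_fractionE; last exact: lt0r_neq0.
  by rewrite k_gt0 ltnW.
split; first exact/confirmed_alloc_efficient/ltnW.
split; first exact: R2TFRM_restricted_UIC.
split; first exact/R2TFRM_user_IR/ltW.
by move=> b; apply: R2TFRM_miner_IR.
Qed.
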